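(* Let $\mathcal{A}$ be a unital $\mathbb{F}$-algebra of dimension $n>2$ having the maximal possible length $l(\mathcal{A})=2^{n-2}$. Then there exists a generating set $S$ of $\mathcal{A}$ whose characteristic sequence is $(0,1,2,4,\ldots,2^{n-2})$, i.e. $m_0=0$ and $m_h=2^{h-1}$ for $h=1,\ldots,n-1$.
   Context: Algebras are finite-dimensional, unital, not necessarily associative, over a field $\mathbb{F}$. For a finite generating set $S$ of $\mathcal{A}$, a word in $S$ is any product (with any bracketing) of finitely many elements of $S$; its length is the number of factors, and $1$ is a word of length $0$. $L_i(S)$ is the linear span of all words in $S$ of length at most $i$ (so $L_0(S)=\mathbb{F}$); $l(S)=\min\{k\ge0: L_k(S)=\mathcal{A}\}$ and $l(\mathcal{A})=\max\{l(S): S\text{ a finite generating set}\}$. It is known that $l(\mathcal{A})\le 2^{n-2}$ for unital algebras of dimension $n\ge2$, and this bound is attained. The characteristic sequence of $S$ is the non-decreasing sequence $(m_0,\ldots,m_{n-1})$ constructed as follows: $m_0=0$; with $s_1=\dim L_1(S)-1$, set $m_1=\cdots=m_{s_1}=1$; inductively, if $m_1,\ldots,m_r$ are defined using $L_1(S),\ldots,L_{k-1}(S)$, put $s_k=\dim L_k(S)-\dim L_{k-1}(S)$ and set $m_{r+1}=\cdots=m_{r+s_k}=k$. *)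

From HB Require Import structures.
From mathcomp Require Import all_boot all_algebra.
Set Implicit Arguments. Unset Strict Implicit. Unset Printing Implicit Defensive.
Import GRing.Theory.
Local Open Scope ring_scope.

Definition unital_algebra (F : fieldType) (V : vectType F)
    (mul : V -> V -> V) (one : V) : Prop :=
  [/\ (forall (a : F) (x y z : V), mul (a *: x + y) z = a *: mul x z + mul y z),
      (forall (a : F) (x y z : V), mul z (a *: x + y) = a *: mul z x + mul z y)
    & (forall x : V, mul one x = x /\ mul x one = x)].

Section Words.
Variables (F : fieldType) (V : vectType F) (mul : V -> V -> V) (one : V).

(* words_rec S k = [:: W_0; W_1; ...; W_k] where W_i is the list of all words
   in S of length exactly i (all bracketings): W_0 = [:: one], W_1 = S, and
   for i >= 2, W_i consists of the products u*v with u in W_j, v in W_(i-j),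
   1 <= j <= i-1. *)
Fixpoint words_rec (S : seq V) (k : nat) : seq (seq V) :=
  match k with
  | 0 => [:: [:: one]]
  | k'.+1 =>
      let W := words_rec S k' in
      rcons W (if k' is 0 then S
               else flatten [seq allpairs mul (nth [::] W i) (nth [::] W (k'.+1 - i))
                            | i <- iota 1 k'])
  end.

Definition Lsp (S : seq V) (k : nat) : {vspace V} := <<flatten (words_rec S k)>>%VS.

Definition generates (S : seq V) : Prop := exists k, Lsp S k = fullv.

Definition is_lengthS (S : seq V) (k : nat) : Prop :=
  Lsp S k = fullv /\ forall j, (j < k)%N -> Lsp S j <> fullv.

Definition alg_length_is (N : nat) : Prop :=
  (exists S k, is_lengthS S k /\ k = N) /\
  (forall S k, is_lengthS S k -> (k <= N)%N).

Definition char_seq (S : seq V) (K : nat) : seq nat :=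
  0%N :: flatten [seq nseq (\dim (Lsp S k) - \dim (Lsp S k.-1))%N k | k <- iota 1 K].

End Words.

From HB Require Import structures.
From mathcomp Require Import all_boot all_algebra zify.
Set Implicit Arguments. Unset Strict Implicit. Unset Printing Implicit Defensive.
Import GRing.Theory.

(* Let S realise the maximal length K = 2^(n-2) and d k = dim L_k(S).  If
   L_(2m) = L_m for some m < K, then L_m is closed under multiplication and
   contains 1 and S, so L_m = A, contradicting l(S) = K.  Hence d strictly
   increases from m to 2m for every m < K, and starting from d 0 = 1 this
   gives d m >= i + 2 for m >= 2^i.  Conversely, if d (2^i) exceeded i + 2,
   doubling n - 2 - i more times would push the dimension beyond n.  So d is
   constant equal to i + 2 on [2^i, 2^(i+1)), which is the claimed
   characteristic sequence. *)

Lemma span_map_subv (F : fieldType) (V W : vectType F) (f : V -> W)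
    (X : seq V) (U : {vspace W}) :
  (forall (a : F) x y, f (a *: x + y)%R = (a *: f x + f y)%R) ->
  {in X, forall y, f y \in U} -> forall x, x \in <<X>>%VS -> f x \in U.
Proof.
move=> f_lin; have f0 : f 0%R = 0%R.
  by have := f_lin (-1)%R 0%R 0%R; rewrite scaler0 addr0 scaleN1r addNr.
elim: X => [|y X IH] fXU x.
  by rewrite span_nil memv0 => /eqP->; rewrite f0 mem0v.
rewrite span_cons => /memv_addP[_ /vlineP[a ->] [z zX ->]].
rewrite f_lin; apply: memvD; first by rewrite memvZ // fXU ?mem_head.
by apply: IH zX => w wX; rewrite fXU // in_cons wX orbT.
Qed.

Lemma flatten_nseq0 (s : seq nat) (g : nat -> nat) :
  {in s, forall k, g k = 0} -> flatten [seq nseq (g k) k | k <- s] = [::].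
Proof.
elim: s => [|x s IH] g0 //=.
by rewrite g0 ?mem_head //= IH // => k ks; rewrite g0 // in_cons ks orbT.
Qed.

Section Words.
Variables (F : fieldType) (V : vectType F) (mul : V -> V -> V) (one : V).
Variable S : seq V.

Local Notation L := (Lsp mul one S).

Definition words (i : nat) : seq V := nth [::] (words_rec mul one S i) i.

Lemma size_words_rec k : size (words_rec mul one S k) = k.+1.
Proof. by elim: k => [|k IH] //=; rewrite size_rcons IH. Qed.

Lemma nth_words_rec k i : i <= k -> nth [::] (words_rec mul one S k) i = words i.
Proof.
elim: k => [|k IH]; first by rewrite leqn0 => /eqP->.
rewrite leq_eqVlt => /orP[/eqP-> //|]; rewrite ltnS => ik.
by rewrite /= nth_rcons size_words_rec ltnS ik IH.
Qed.

Lemma words_recSS k :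
  words_rec mul one S k.+2 =
  rcons (words_rec mul one S k.+1)
    (flatten [seq allpairs mul (nth [::] (words_rec mul one S k.+1) i)
                                (nth [::] (words_rec mul one S k.+1) (k.+2 - i))
             | i <- iota 1 k.+1]).
Proof. by []. Qed.

Lemma wordsSS k :
  words k.+2 =
  flatten [seq allpairs mul (words i) (words (k.+2 - i)) | i <- iota 1 k.+1].
Proof.
rewrite {1}/words words_recSS nth_rcons size_words_rec ltnn eqxx.
congr flatten; apply/eq_in_map => i; rewrite mem_iota => /andP[i1 ik].
by rewrite !nth_words_rec //; lia.
Qed.

Lemma mul_mem_words a b u v : 0 < a -> 0 < b ->
  u \in words a -> v \in words b -> mul u v \in words (a + b).
Proof.
case: a => // a; case: b => // b _ _ uw vw.
rewrite addSn addnS wordsSS; apply/flattenP.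
exists (allpairs mul (words a.+1) (words b.+1)); last exact: allpairs_f.
apply/mapP; exists a.+1; first by rewrite mem_iota; lia.
by rewrite subSS -addnS addKn.
Qed.

Lemma words_mulP k x : x \in words k.+2 ->
  exists a b u v, [/\ a + b = k.+2, 0 < a, 0 < b, u \in words a & v \in words b]
                  /\ x = mul u v.
Proof.
rewrite wordsSS => /flattenP[_ /mapP[i + ->]] /allpairsP[[u v] /= [uw vw ->]].
by rewrite mem_iota => ik; exists i, (k.+2 - i), u, v; split => //; split => //; lia.
Qed.

Lemma flatten_words_recP m y :
  y \in flatten (words_rec mul one S m) -> exists2 i, i <= m & y \in words i.
Proof.
move=> /flattenP[_ /(nthP [::])[i + <-]]; rewrite size_words_rec ltnS => im.
by rewrite nth_words_rec // => yw; exists i.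
Qed.

Lemma mem_Lsp k i x : i <= k -> x \in words i -> x \in L k.
Proof.
move=> ik xw; apply/memv_span/flattenP.
exists (nth [::] (words_rec mul one S k) i); last by rewrite nth_words_rec.
by rewrite mem_nth // size_words_rec ltnS.
Qed.

Lemma Lsp_subv k (U : {vspace V}) :
  (forall i, i <= k -> {subset words i <= U}) -> (L k <= U)%VS.
Proof. by move=> wU; apply/span_subvP => x /flatten_words_recP[i /wU]; apply. Qed.

Lemma Lsp_mono j k : j <= k -> (L j <= L k)%VS.
Proof. by move=> jk; apply: Lsp_subv => i ij x; apply: mem_Lsp; apply: leq_trans jk. Qed.

Lemma dim_Lsp0 : one != 0%R -> \dim (L 0) = 1.
Proof. by move=> one_nz; rewrite /Lsp /= span_seq1 dim_vline one_nz. Qed.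

Section Unital.
Hypothesis unital : unital_algebra mul one.

Lemma unit_neq0 : 0 < \dim (fullv : {vspace V}) -> one != 0%R.
Proof.
case: unital => mul_linl _ mul1; apply: contraTneq => one0.
suff -> : (fullv : {vspace V}) = 0%VS by rewrite dimv0.
apply/vspaceP => x; rewrite memvf memv0 -(mul1 x).1 one0.
by have := mul_linl (-1)%R 0%R 0%R x; rewrite scaler0 addr0 scaleN1r addNr => ->; rewrite eqxx.
Qed.

(* Products of words of lengths in [1, m] have length at most 2m, and the unit
   handles the words of length 0. *)
Lemma Lsp_mul_closed m : (L (maxn 1 (2 * m)) <= L m)%VS ->
  {in L m &, forall u v, mul u v \in L m}.
Proof.
case: unital => mul_linl mul_linr mul1 Lstable u v uL vL.
apply: (span_map_subv (f := mul^~ v)) uL => [a x y|y /flatten_words_recP[a am yw]].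
  exact: mul_linl.
apply: (span_map_subv (f := mul y)) vL => [b x z|z /flatten_words_recP[b bm zw]].
  exact: mul_linr.
case: a am yw => [|a] am yw.
  by move: yw; rewrite mem_seq1 => /eqP->; rewrite (mul1 z).1 (mem_Lsp bm).
case: b bm zw => [|b] bm zw.
  by move: zw; rewrite mem_seq1 => /eqP->; rewrite (mul1 y).2 (mem_Lsp am).
by apply: (subvP Lstable); apply: (mem_Lsp (i := a.+1 + b.+1)); rewrite ?mul_mem_words //; lia.
Qed.

Lemma Lsp_stable m : (L (maxn 1 (2 * m)) <= L m)%VS -> forall k, (L k <= L m)%VS.
Proof.
move=> Lstable k; apply: Lsp_subv => i _; elim/ltn_ind: i => i IH x xw.
have [i_small | i_large] := leqP i (maxn 1 (2 * m)).
  exact: (subvP Lstable) (mem_Lsp i_small xw).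
case: i IH i_large xw => [|[|i]] IH i_large xw; try lia.
have [a [b [u [v [[ab a0 b0 uw vw] ->]]]]] := words_mulP xw.
by apply: (Lsp_mul_closed Lstable); [apply: (IH a) | apply: (IH b)] => //; lia.
Qed.

Lemma dim_Lsp_double K m : is_lengthS mul one S K -> m < K ->
  \dim (L m) < \dim (L (maxn 1 (2 * m))).
Proof.
move=> [LK Lshort] mK; rewrite ltnNge; apply/negP => dim_le.
have Lm_eq : L m = L (maxn 1 (2 * m)).
  by apply/eqP; rewrite eqEdim dim_le Lsp_mono // leq_max leq_pmull ?orbT.
apply: (Lshort m mK); apply/eqP; rewrite eqEdim subvf -LK dimvS //.
by apply: Lsp_stable; rewrite -Lm_eq.
Qed.

End Unital.
End Words.

Section DoublingDimensions.
Variables (d : nat -> nat) (n : nat).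
Hypotheses (d_mono : {homo d : j k / j <= k}) (d0 : d 0 = 1) (d_le : forall k, d k <= n).
Hypothesis d_double : forall m, m < 2 ^ (n - 2) -> d m < d (maxn 1 (2 * m)).

Lemma doubling_iter s m : 0 < m -> 2 ^ s * m < 2 ^ (n - 2).+1 ->
  d m + s <= d (2 ^ s * m).
Proof.
move=> m0; elim: s => [|s IH]; first by rewrite mul1n addn0.
rewrite !expnS -mulnA ltn_pmul2l // => sm_half.
have := d_double sm_half; rewrite (maxn_idPr _) ?muln_gt0 ?expn_gt0 ?m0 //.
by rewrite addnS; apply: leq_ltn_trans; apply: IH; rewrite expnS; lia.
Qed.

Lemma const_on_dyadic i m : i <= n - 2 -> 2 ^ i <= m < 2 ^ i.+1 -> d m = i + 2.
Proof.
move=> i_le /andP[im mi]; have m0 : 0 < m by apply: leq_trans im; rewrite expn_gt0.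
apply/eqP; rewrite eqn_leq; apply/andP; split.
  have := doubling_iter (s := n - 2 - i) m0.
  rewrite -[(n - 2).+1](_ : n - 2 - i + i.+1 = _) ?expnD ?ltn_pmul2l ?expn_gt0 //; last by lia.
  by move=> /(_ mi); have := d_le (2 ^ (n - 2 - i) * m); lia.
have d1 : 2 <= d 1.
  by have := d_double (m := 0) (expn_gt0 _ _); rewrite d0 muln0.
apply: leq_trans (d_mono im); have := doubling_iter (s := i) (isT : 0 < 1).
by rewrite muln1 ltn_exp2l //; lia.
Qed.

Lemma increments_dyadic p : p <= n - 2 ->
  flatten [seq nseq (d k - d k.-1) k | k <- iota 1 (2 ^ p)] =
  [seq 2 ^ h.-1 | h <- iota 1 p.+1].
Proof.
elim: p => [|p IH] p_le.
  by rewrite /= d0 (@const_on_dyadic 0 1).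
pose X := 2 ^ p; have X0 : 0 < X by rewrite expn_gt0.
have dX k : X <= k < 2 * X -> d k = p + 2.
  by move=> kX; apply: const_on_dyadic; rewrite ?expnS -/X; lia.
rewrite expnS -/X (_ : 2 * X = X + ((X - 1) + 1)); last by lia.
rewrite !iotaD !map_cat !flatten_cat IH; last by lia.
rewrite -[p.+2]addn1 iotaD map_cat; congr cat.
rewrite flatten_nseq0 => [|k]; last by rewrite mem_iota => kX; rewrite !dX; lia.
rewrite (_ : 1 + X + (X - 1) = 2 * X); last by lia.
rewrite /= (const_on_dyadic (i := p.+1)) ?expnS -/X ?dX; try lia.
by rewrite addSn subSnn.
Qed.

End DoublingDimensions.

Theorem proposition6p1 (F : fieldType) (V : vectType F)
    (mul : V -> V -> V) (one : V) :
  unital_algebra mul one ->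
  (2 < \dim (fullv : {vspace V}))%N ->
  alg_length_is mul one (2 ^ (\dim (fullv : {vspace V}) - 2)) ->
  exists (S : seq V) (K : nat),
    is_lengthS mul one S K /\
    char_seq mul one S K =
      0%N :: [seq 2 ^ h.-1 | h <- iota 1 (\dim (fullv : {vspace V}) - 1)].
Proof.
move=> unital n_gt2 [[S [K [S_length K_eq]]] _].
exists S, K; split => //; subst K.
set n := \dim (fullv : {vspace V}) in n_gt2 S_length *.
rewrite /char_seq (@increments_dyadic _ n) //.
- by rewrite (_ : (n - 2).+1 = n - 1) //; lia.
- by move=> j k jk; apply/dimvS/(Lsp_mono mul one S).
- by rewrite dim_Lsp0 // (unit_neq0 unital) //; lia.
- by move=> k; apply/dimvS/subvf.
- by move=> m; apply: dim_Lsp_double.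
Qed.
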